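(* Fix an initial exchange matrix $B^0$ and initial coefficients $p_1,\dots,p_n\in\mathbb P$ at the vertex $v_0$, and let $\mathcal S=\mathbb{Q}\mathbb{P}_{\mathrm{sf}}(y_1,\dots,y_n)$. Then for every vertex $v\in\mathbb T^n$ and every $j\in[1,n]$, $$\widetilde Y_{j;v}=\frac{Y^{\mathcal S}_{j;v}(p_1y_1,\dots,p_ny_n)}{p_{j;v}},$$ where $Y^{\mathcal S}_{j;v}(p_1y_1,\dots,p_ny_n)$ denotes the image of $Y_{j;v}\in\mathbb Q_{\mathrm{sf}}(y_1,\dots,y_n)$ under the unique semifield morphism $\mathbb Q_{\mathrm{sf}}(y_1,\dots,y_n)\to\mathcal S$ sending $y_i\mapsto p_iy_i$.
   Context: A semifield $(\mathbb P,\oplus,\cdot,1)$ satisfies the field axioms except that the auxiliary addition $\oplus$ need not have a neutral element or inverses. For $p\in\mathbb P$ set $p^+=p/(p\oplus 1)$, $p^-=1/(p\oplus1)$, and for $x\in\mathbb R$: $p^{[\![x]\!]}=p^-$ if $x<0$, $=1$ if $x=0$, $=p^+$ if $x>0$. For a set $S$, the universal semifield $\mathbb Q_{\mathrm{sf}}(S)\subset\mathbb Q(S)$ consists of rational functions expressible as ratios of polynomials in $S$ with positive integer coefficients; for any semifield $\mathbb P'$ and any map $S\to\mathbb P'$ there is a unique semifield morphism $\mathbb Q_{\mathrm{sf}}(S)\to\mathbb P'$ extending it, and the image of $f$ under the morphism $s_i\mapsto q_i$ is written $f^{\mathbb P'}(q_1,\dots)$. For a semifield $\mathbb P$, $\mathbb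 Z\mathbb P$ is the group ring (a domain), $\mathbb Q\mathbb P$ its fraction field, and $\mathbb Q\mathbb P_{\mathrm{sf}}(u_1,\dots,u_n)\subset\mathbb Q\mathbb P(u_1,\dots,u_n)$ the semifield of rational functions $f/g$ with $f,g$ nonzero polynomials in the $u_i$ whose coefficients are nonnegative integer combinations of elements of $\mathbb P$ (with ordinary $+$ and $\cdot$). Matrix mutation in direction $k$ of a skew-symmetrizable $B=(b_{ij})$: $b'_{ij}=-b_{ij}$ if $i=k$ or $j=k$, else $b'_{ij}=b_{ij}+\operatorname{sgn}(b_{ik})[b_{ik}b_{kj}]_+$, with $[x]_+=\max(x,0)$. A $Y$-seed $(\mathbf y,B)$ in a semifield mutates in direction $k$ to $(\mathbf y',B')$ with $y'_k=y_k^{-1}$ and $y'_j=y_j(1\oplus y_k^{-\operatorname{sgn}(b_{kj})})^{-b_{kj}}$ for $j\ne k$. A labeled $Y$-seed with coefficients is a triple $(\mathbf y,\mathbf p,B)$ with $(\mathbf p,B)$ a $Y$-seed in $\mathbb P$ and $(\mathbf y,B)$ a $Y$-seed in some $\mathbb Q\mathbb P_{\mathrm{sf}}(u_1,\dots,u_n)$; its mutation in direction $k$ is $(\mathbf y',\mathbf p',B')$ where $(\mathbf p',B')$ is the $Y$-seed mutation of $(\mathbf p,B)$, $y'_k=y_k^{-1}$, and for $j\neq k$: $y'_j=y_j\big(p_k^{[\![b_{kj}]\!]}+p_k^{[\![-b_{kj}]\!]}y_k^{-\operatorname{sgn}(b_{kj})}\big)^{-b_{kj}}$ (ordinary addition).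 $\mathbb T^n$ is the $n$-regular tree with edges labeled by $[1,n]$ so that edges at a vertex have distinct labels, with initial vertex $v_0$; a ($Y$-)pattern is an assignment of seeds to vertices such that seeds at vertices joined by an edge labeled $k$ are related by mutation in direction $k$. $Y_{j;v}\in\mathbb Q_{\mathrm{sf}}(y_1,\dots,y_n)$ are the components of the $Y$-pattern $v\mapsto((Y_{1;v},\dots,Y_{n;v}),B_v)$ with initial seed $((y_1,\dots,y_n),B^0)$ at $v_0$; $\widetilde Y_{j;v}\in\mathbb Q\mathbb P_{\mathrm{sf}}(y_1,\dots,y_n)$ and $p_{j;v}\in\mathbb P$ are the components of the $Y$-pattern with coefficients $v\mapsto((\widetilde Y_{1;v},\dots,\widetilde Y_{n;v}),(p_{1;v},\dots,p_{n;v}),B_v)$ with initial seed $((y_1,\dots,y_n),(p_1,\dots,p_n),B^0)$ at $v_0$. *)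

From HB Require Import structures.
From mathcomp Require Import all_boot all_order all_algebra.
Set Implicit Arguments. Unset Strict Implicit. Unset Printing Implicit Defensive.
Import Order.TTheory GRing.Theory Num.Theory.

Record semifield := Semifield {
  sf_car :> Type;
  sf_mul : sf_car -> sf_car -> sf_car;
  sf_one : sf_car;
  sf_inv : sf_car -> sf_car;
  sf_add : sf_car -> sf_car -> sf_car;
  sf_mulA : forall x y z, sf_mul x (sf_mul y z) = sf_mul (sf_mul x y) z;
  sf_mulC : forall x y, sf_mul x y = sf_mul y x;
  sf_mul1 : forall x, sf_mul sf_one x = x;
  sf_mulV : forall x, sf_mul (sf_inv x) x = sf_one;
  sf_addA : forall x y z, sf_add x (sf_add y z) = sf_add (sf_add x y) z;
  sf_addC : forall x y, sf_add x y = sf_add y x;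
  sf_mulDl : forall x y z, sf_mul (sf_add x y) z = sf_add (sf_mul x z) (sf_mul y z)
}.
Arguments sf_one {s}.

Section SF.
Variable P : semifield.

Definition sf_div (x y : P) : P := sf_mul x (sf_inv y).
Definition sf_exp (x : P) (k : nat) : P := iter k (sf_mul x) sf_one.
Definition sf_powz (x : P) (z : int) : P :=
  match z with
  | Posz k => sf_exp x k
  | Negz k => sf_inv (sf_exp x k.+1)
  end.
Definition sf_plus (p : P) : P := sf_div p (sf_add p sf_one).
Definition sf_minus (p : P) : P := sf_inv (sf_add p sf_one).
Definition sf_bracket (p : P) (x : int) : P :=
  if (x < 0)%R then sf_minus p else if x == 0 then sf_one else sf_plus p.
End SF.

Definition sf_morph (U V : semifield) (f : U -> V) : Prop :=
  (forall x y, f (sf_mul x y) = sf_mul (f x) (f y)) /\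
  (forall x y, f (sf_add x y) = sf_add (f x) (f y)).

(* (U, gen) has the universal property of Q_sf(gen_1, ..., gen_n):
   every map of the generators into a semifield extends uniquely to a
   semifield morphism. *)
Definition sf_universal n (U : semifield) (gen : 'I_n -> U) : Prop :=
  forall (P' : semifield) (q : 'I_n -> P'),
    exists f : U -> P',
      [/\ sf_morph f, (forall i, f (gen i) = q i) &
          forall g : U -> P', sf_morph g -> (forall i, g (gen i) = q i) ->
             forall x, g x = f x].

Definition skew_symmetrizable n (B : 'M[int]_n) : Prop :=
  exists d : 'I_n -> int, (forall i, (0 < d i)%R) /\
    forall i j, (d i * B i j = - (d j * B j i))%R.

Definition mx_mut n (k : 'I_n) (B : 'M[int]_n) : 'M[int]_n :=
  \matrix_(i, j) (if (i == k) || (j == k) then - B i j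
                  else B i j + sgz (B i k) * Num.max 0 (B i k * B k j))%R.

Definition y_mut n (P : semifield) (k : 'I_n) (B : 'M[int]_n) (y : 'I_n -> P)
  : 'I_n -> P :=
  fun j => if j == k then sf_inv (y k)
           else sf_mul (y j)
                  (sf_powz (sf_add sf_one (sf_powz (y k) (- sgz (B k j))%R))
                           (- B k j)%R).

(* mutation of the y-part of a labeled Y-seed with coefficients
   (y, p, B): y lives in S, p in P, iota : P -> S the inclusion of P. *)
Definition yc_mut n (P S : semifield) (iota : P -> S) (k : 'I_n)
  (B : 'M[int]_n) (p : 'I_n -> P) (y : 'I_n -> S) : 'I_n -> S :=
  fun j => if j == k then sf_inv (y k)
           else sf_mul (y j)
             (sf_powz (sf_add (iota (sf_bracket (p k) (B k j)))
                              (sf_mul (iota (sf_bracket (p k) (- B k j)%R))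
                                      (sf_powz (y k) (- sgz (B k j))%R)))
                      (- B k j)%R).

(* A vertex of T^n is identified with the unique path from v0 to it,
   i.e. a reduced word in the edge labels (no two consecutive letters equal). *)
Definition tree_vertex n (w : seq 'I_n) : bool := sorted (fun a b => a != b) w.

Definition y_pattern n (P : semifield) (B0 : 'M[int]_n) (y0 : 'I_n -> P)
  (w : seq 'I_n) : ('I_n -> P) * 'M[int]_n :=
  foldl (fun s k => (y_mut k s.2 s.1, mx_mut k s.2)) (y0, B0) w.

Definition yc_pattern n (P S : semifield) (iota : P -> S) (B0 : 'M[int]_n)
  (y0 : 'I_n -> S) (p0 : 'I_n -> P) (w : seq 'I_n)
  : ('I_n -> S) * ('I_n -> P) * 'M[int]_n :=
  foldl (fun s k =>
           (yc_mut iota k s.2 s.1.2 s.1.1, y_mut k s.2 s.1.2, mx_mut k s.2))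
        (y0, p0, B0) w.

Definition Y_jv n (U : semifield) (B0 : 'M[int]_n) (gen : 'I_n -> U)
  (v : seq 'I_n) (j : 'I_n) : U := (y_pattern B0 gen v).1 j.
Definition Yt_jv n (P S : semifield) (iota : P -> S) (B0 : 'M[int]_n)
  (y0 : 'I_n -> S) (p0 : 'I_n -> P) (v : seq 'I_n) (j : 'I_n) : S :=
  (yc_pattern iota B0 y0 p0 v).1.1 j.
Definition p_jv n (P S : semifield) (iota : P -> S) (B0 : 'M[int]_n)
  (y0 : 'I_n -> S) (p0 : 'I_n -> P) (v : seq 'I_n) (j : 'I_n) : P :=
  (yc_pattern iota B0 y0 p0 v).1.2 j.

From HB Require Import structures.
From mathcomp Require Import all_boot all_order all_algebra.
Import Order.TTheory GRing.Theory Num.Theory.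

Set Implicit Arguments.
Unset Strict Implicit.

(* The substitution y_i |-> p_i y_i intertwines the two patterns: the invariant
   phi(Y_{j;v}) = p_{j;v} * Yt_{j;v} survives every mutation.  At a mutation in
   direction k with b = b_{kj} != 0 and s = -sgn b, the factor
   1 (+) (p_k Y_k)^s splits as (1 (+) p_k^s) * (p_k^[[b]] (+) p_k^[[-b]] Y_k^s),
   since (1 (+) p_k^s) p_k^[[b]] = 1 and (1 (+) p_k^s) p_k^[[-b]] = p_k^s;
   raised to the power -b, the first factor is exactly what the coefficient
   mutation p_j |-> p'_j contributes. *)

Section SemifieldTheory.
Variable S : semifield.
Implicit Types x y z w : S.

Lemma sf_mulr1 x : sf_mul x sf_one = x.
Proof. by rewrite sf_mulC sf_mul1. Qed.

Lemma sf_mulrV x : sf_mul x (sf_inv x) = sf_one.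
Proof. by rewrite sf_mulC sf_mulV. Qed.

Lemma sf_inv_uniq x y : sf_mul x y = sf_one -> x = sf_inv y.
Proof. by move=> xy1; rewrite -(sf_mulr1 x) -(sf_mulrV y) sf_mulA xy1 sf_mul1. Qed.

Lemma sf_mulACA x y z w :
  sf_mul (sf_mul x y) (sf_mul z w) = sf_mul (sf_mul x z) (sf_mul y w).
Proof. by rewrite -!sf_mulA (sf_mulA y) (sf_mulC y z) -(sf_mulA z). Qed.

Lemma sf_invM x y : sf_inv (sf_mul x y) = sf_mul (sf_inv x) (sf_inv y).
Proof. by symmetry; apply: sf_inv_uniq; rewrite sf_mulACA !sf_mulV sf_mul1. Qed.

Lemma sf_expM x y k : sf_exp (sf_mul x y) k = sf_mul (sf_exp x k) (sf_exp y k).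
Proof.
elim: k => [|k IHk]; first by rewrite /sf_exp /= sf_mul1.
by rewrite /sf_exp /= -!/(sf_exp _ k) IHk sf_mulACA.
Qed.

Lemma sf_powzM x y (z : int) :
  sf_powz (sf_mul x y) z = sf_mul (sf_powz x z) (sf_powz y z).
Proof. by case: z => k; rewrite /sf_powz sf_expM ?sf_invM. Qed.

Lemma sf_powzN1 x : sf_powz x (-1)%R = sf_inv x.
Proof. by rewrite /= /sf_exp /= sf_mulr1. Qed.

End SemifieldTheory.

Section MultiplicativeMorphism.
Variables (U V : semifield) (f : U -> V).
Hypothesis fM : forall a b, f (sf_mul a b) = sf_mul (f a) (f b).

Lemma sf_morph1 : f sf_one = sf_one.
Proof.
have f1f1 : sf_mul (f sf_one) (f sf_one) = f sf_one by rewrite -fM sf_mul1.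
by rewrite -(sf_mul1 (f sf_one)) -(sf_mulV (f sf_one)) -sf_mulA f1f1.
Qed.

Lemma sf_morphV a : f (sf_inv a) = sf_inv (f a).
Proof. by apply: sf_inv_uniq; rewrite -fM sf_mulV sf_morph1. Qed.

Lemma sf_morph_exp a k : f (sf_exp a k) = sf_exp (f a) k.
Proof.
elim: k => [|k IHk]; first exact: sf_morph1.
by rewrite /sf_exp /= fM -/(sf_exp a k) IHk.
Qed.

Lemma sf_morph_powz a z : f (sf_powz a z) = sf_powz (f a) z.
Proof. by case: z => k; rewrite /sf_powz ?sf_morphV sf_morph_exp. Qed.

End MultiplicativeMorphism.

Section Rescaling.
Local Open Scope ring_scope.
Variables (P S : semifield) (iota : P -> S).
Hypothesis iota_mul : forall a b, iota (sf_mul a b) = sf_mul (iota a) (iota b).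

Lemma sf_bracket_normalize (q : P) (b : int) : b != 0 ->
  let c := sf_add sf_one (sf_powz q (- sgz b)) in
  sf_mul c (sf_bracket q b) = sf_one /\
  sf_mul c (sf_bracket q (- b)) = sf_powz q (- sgz b).
Proof.
rewrite /sf_bracket /sf_plus /sf_minus /sf_div => b_neq0.
case: (ltgtP b 0) => [b_lt0|b_gt0|b_eq0]; last by rewrite b_eq0 in b_neq0.
- rewrite ltr0_sgz // opprK oppr_lt0 ltNge ltW //= oppr_eq0 lt_eqF //.
  rewrite !sf_mulr1 sf_addC sf_mulrV; split=> //.
  by rewrite sf_mulA (sf_mulC _ q) -sf_mulA sf_mulrV sf_mulr1.
- rewrite gtr0_sgz // oppr_lt0 b_gt0.
  have -> : sf_add sf_one (sf_powz q (-1)) = sf_mul (sf_add q sf_one) (sf_inv q).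
    by rewrite sf_powzN1 sf_mulDl sf_mulrV sf_mul1.
  split; last by rewrite (sf_mulC (sf_add _ _)) -sf_mulA sf_mulrV sf_mulr1 sf_powzN1.
  by rewrite (sf_mulC q) sf_mulACA sf_mulrV sf_mulV sf_mul1.
Qed.

Lemma sf_add1_rescale (c r1 r2 q : P) (W : S) :
  sf_mul c r1 = sf_one -> sf_mul c r2 = q ->
  sf_add sf_one (sf_mul (iota q) W) =
  sf_mul (iota c) (sf_add (iota r1) (sf_mul (iota r2) W)).
Proof.
move=> cr1 cr2; rewrite (sf_mulC (iota c)) sf_mulDl (sf_mulC (iota r1)).
by rewrite -iota_mul cr1 (sf_morph1 iota_mul) (sf_mulC _ (iota c)) sf_mulA -iota_mul cr2.
Qed.

Lemma mutation_factor_rescale (b : int) (q : P) (Z : S) :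
  sf_powz (sf_add sf_one (sf_powz (sf_mul (iota q) Z) (- sgz b))) (- b) =
  sf_mul (iota (sf_powz (sf_add sf_one (sf_powz q (- sgz b))) (- b)))
    (sf_powz (sf_add (iota (sf_bracket q b))
                     (sf_mul (iota (sf_bracket q (- b)))
                             (sf_powz Z (- sgz b)))) (- b)).
Proof.
have [->|b_neq0] := eqVneq b 0; first by rewrite oppr0 (sf_morph1 iota_mul) sf_mul1.
rewrite (sf_morph_powz iota_mul) -sf_powzM (sf_powzM (iota q)) -(sf_morph_powz iota_mul q).
have [c_br c_brN] := sf_bracket_normalize q b_neq0.
by rewrite (sf_add1_rescale _ c_br c_brN).
Qed.

Lemma y_mut_rescale n (U : semifield) (phi : U -> S) (k : 'I_n) (B : 'M[int]_n)
    (yU : 'I_n -> U) (p : 'I_n -> P) (yS : 'I_n -> S) :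
  sf_morph phi -> (forall i, phi (yU i) = sf_mul (iota (p i)) (yS i)) ->
  forall j, phi (y_mut k B yU j) =
            sf_mul (iota (y_mut k B p j)) (yc_mut iota k B p yS j).
Proof.
case=> phiM phiA yUE j; rewrite /y_mut /yc_mut.
case: eqP => _; first by rewrite (sf_morphV phiM) yUE sf_invM (sf_morphV iota_mul).
rewrite phiM (sf_morph_powz phiM) phiA (sf_morph1 phiM) (sf_morph_powz phiM) !yUE.
by rewrite mutation_factor_rescale sf_mulACA -iota_mul.
Qed.

Lemma pattern_rescale n (U : semifield) (phi : U -> S) (B0 : 'M[int]_n)
    (gen : 'I_n -> U) (y : 'I_n -> S) (p : 'I_n -> P) (w : seq 'I_n) :
  sf_morph phi -> (forall i, phi (gen i) = sf_mul (iota (p i)) (y i)) ->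
  (y_pattern B0 gen w).2 = (yc_pattern iota B0 y p w).2 /\
  forall j, phi ((y_pattern B0 gen w).1 j) =
            sf_mul (iota ((yc_pattern iota B0 y p w).1.2 j))
                   ((yc_pattern iota B0 y p w).1.1 j).
Proof.
move=> phi_morph genE; elim/last_ind: w => [|w k [IHB IHy]] //=.
rewrite /y_pattern /yc_pattern !foldl_rcons /= -/(y_pattern B0 gen w)
  -/(yc_pattern iota B0 y p w) IHB.
by split=> //; apply: y_mut_rescale.
Qed.

End Rescaling.

Theorem mainTheorem1 (n : nat) (P S : semifield) (iota : P -> S)
  (iota_mul : forall a b, iota (sf_mul a b) = sf_mul (iota a) (iota b))
  (iota_inj : injective iota)
  (y : 'I_n -> S)
  (U : semifield) (gen : 'I_n -> U) (hU : sf_universal gen)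
  (B0 : 'M[int]_n) (hB0 : skew_symmetrizable B0) (p : 'I_n -> P)
  (phi : U -> S) (hphi : sf_morph phi)
  (hphi_gen : forall i, phi (gen i) = sf_mul (iota (p i)) (y i))
  (v : seq 'I_n) (hv : tree_vertex v) (j : 'I_n) :
  Yt_jv iota B0 y p v j =
  sf_div (phi (Y_jv B0 gen v j)) (iota (p_jv iota B0 y p v j)).
Proof.
have [_ YE] := pattern_rescale iota_mul B0 v hphi hphi_gen.
by rewrite /Y_jv /Yt_jv /p_jv YE /sf_div sf_mulC sf_mulA sf_mulV sf_mul1.
Qed.
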